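(* For every $n\ge1$ and every $\ell>0$, the maps $(\phi,\gamma)\mapsto\gamma\circ\phi$ give homeomorphisms \[ \mathcal G(\ell,n)\times N_n\cong\mathbb P^\ell_{0_n,1_n}\mathbb M^{\mathcal G}(|\square[n]|^t_{reg}),\qquad \mathcal G(\ell,n)\times\partial N_n\cong\mathbb P^\ell_{0_n,1_n}\mathbb M^{\mathcal G}(|\partial\square[n]|^t_{reg}). \] In particular, for $\ell=1$, $\mathcal G(1,n)\times N_n\cong\mathbb P^{top}_{0_n,1_n}|\square[n]|^t_{reg}$ and $\mathcal G(1,n)\times\partial N_n\cong\mathbb P^{top}_{0_n,1_n}|\partial\square[n]|^t_{reg}$ (for $n=1$ both sides of the boundary statement are empty).
   Context: $\mathbf{Top}$: $\Delta$-generated spaces; mapping spaces carry the $\Delta$-kelleyfication of the compact-open topology, subspaces the $\Delta$-kelleyfication of the relative topology. Precubical sets are presheaves on the box category $\square$; $\square[n]$ is representable, $\partial\square[n]$ its sub-presheaf of cubes of dimension $\le n-1$; $|K|_{geom}=\mathrm{colim}_{\square[n]\to K}[0,1]^n$, so $|\partial\square[n]|_{geom}$ is the boundary of $[0,1]^n$. $0_n=(0,\dots,0)$, $1_n=(1,\dots,1)$. A $d$-path of $[0,1]^n$ is a continuous map $[0,\ell]\to[0,1]^n$ nondecreasing in each coordinate; a $d$-path of $K$ is a Moore composition of images of $d$-paths of cubes under the maps $|c|_{geom}$, tame if the pieces can be chosen with endpoints at vertices. Regular: constant on no nondegenerate interval. $L_1$-arc length: $\sum_i|\gamma_i(t')-\gamma_i(t)|$,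 additive. A $d$-path of length $n$ is natural if the $L_1$-arc length of $\gamma|_{[0,t]}$ equals $t$. $N_n$ (resp. $\partial N_n$) is the space of tame natural $d$-paths $[0,n]\to[0,1]^n$ (resp. with image in $|\partial\square[n]|_{geom}$) from $0_n$ to $1_n$. $\mathcal G(\ell,n)$: nondecreasing homeomorphisms $[0,\ell]\to[0,n]$. Multipointed $d$-spaces $(|X|,X^0,\mathbb P^{top}X)$; $|K|^t_{reg}$ has underlying space $|K|_{geom}$, states $K_0$, execution paths the nonconstant tame regular $d$-paths $[0,1]\to|K|_{geom}$ between vertices. $\mathbb M^{\mathcal G}(X)$ is the Moore flow with $\mathbb P^\ell_{\alpha,\beta}\mathbb M^{\mathcal G}(X)=\{\gamma(t/\ell)\mid\gamma\in\mathbb P^{top}_{\alpha,\beta}X\}\subset\mathbf{TOP}([0,\ell],|X|)$. *)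

From HB Require Import structures.
From mathcomp Require Import all_boot all_order all_algebra.
From mathcomp Require Import all_classical all_reals all_analysis.
Unset Printing Implicit Defensive.
Import Order.TTheory GRing.Theory Num.Theory.
Import numFieldNormedType.Exports.
Local Open Scope classical_set_scope.
Local Open Scope ring_scope.

(* Spaces are given as a carrier subset of an ambient type together   *)
(* with an explicit topology (a family of open subsets of the carrier)*)
Definition space (X : Type) := (set X * set (set X))%type.

Definition homeo {X Y : Type} (SA : space X) (SB : space Y) (f : X -> Y) :=
  [/\ (forall x, SA.1 x -> SB.1 (f x)),
      (forall x y, SA.1 x -> SA.1 y -> f x = f y -> x = y),
      (forall y, SB.1 y -> exists2 x, SA.1 x & f x = y) &
      (forall U, U `<=` SA.1 -> (SA.2 U <-> SB.2 (f @` U)))].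

Definition gen_top {T : Type} (B : set (set T)) : set (set T) :=
  [set U | forall x, U x -> exists (k : nat) (V : 'I_k -> set T),
      [/\ (forall i, B (V i)), (forall i, V i x) &
          (forall y, (forall i, V i y) -> U y)]].

Definition subspace {X : Type} (S : set X) (t : set (set X)) : set (set X) :=
  [set U | exists V, t V /\ U = S `&` V].

Definition prod_top {X Y : Type} (S1 : space X) (S2 : space Y)
  : set (set (X * Y)) :=
  [set W | W `<=` S1.1 `*` S2.1 /\ forall p, W p -> exists U V,
     [/\ S1.2 U, S2.2 V, U p.1, V p.2 &
         forall q, U q.1 -> V q.2 -> W q]].

Definition simplex (R : realType) (m : nat) : set 'rV[R]_m.+1 :=
  [set x | (forall i, 0 <= x ord0 i) /\ \sum_i x ord0 i = 1].

Definition open_in {T : topologicalType} (D U : set T) :=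
  exists O, open O /\ D `&` U = D `&` O.

(* Delta-kelleyfication of a topology t on S (opens of t are subsets  *)
(* of S): final topology w.r.t. all continuous maps Delta^m -> S.      *)
Definition kelley (R : realType) {X : Type} (S : set X) (t : set (set X))
  : set (set X) :=
  [set U | U `<=` S /\ forall (m : nat) (s : 'rV[R]_m.+1 -> X),
     (forall x, @simplex R m x -> S (s x)) ->
     (forall V, t V -> open_in (@simplex R m) (s @^-1` V)) ->
     open_in (@simplex R m) (s @^-1` U)].

Definition subsp (R : realType) {X : Type} (P : set X) (S : space X) : space X :=
  (P, kelley R P (subspace P S.2)).

Definition prodsp (R : realType) {X Y : Type} (S1 : space X) (S2 : space Y)
  : space (X * Y) :=
  (S1.1 `*` S2.1, kelley R (S1.1 `*` S2.1) (prod_top S1 S2)).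

Definition Ival {R : realType} (l : R) := {t : R | (0 <= t <= l)}.

Definition Itop {R : realType} (l : R) : set (set (Ival l)) :=
  [set U | exists O : set R, open O /\ U = [set t | O (sval t)]].

Definition Icompact {R : realType} (l : R) : set (set (Ival l)) :=
  [set C | compact [set sval t | t in C]].

Definition cont {A B : Type} (tA : set (set A)) (tB : set (set B)) (f : A -> B) :=
  forall U, tB U -> tA (f @^-1` U).

Definition compact_open {A Y : Type} (KA : set (set A)) (tY : set (set Y))
  : set (set (A -> Y)) :=
  gen_top [set W | exists C U, [/\ KA C, tY U &
             W = [set f | forall a, C a -> U (f a)]]].

Definition Cmap {R : realType} (L : R) {Y : Type} (tY : set (set Y)) (B : set Y)
  : set (Ival L -> Y) :=
  [set f | (forall t, B (f t)) /\ cont (@Itop R L) tY f].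

Definition TOPsp {R : realType} (L : R) {Y : Type} (tY : set (set Y)) (B : set Y)
  : space (Ival L -> Y) :=
  (Cmap L tY B,
   kelley R (Cmap L tY B)
     (subspace (Cmap L tY B) (compact_open (@Icompact R L) tY))).

(* A cube of square[n] = a face of [0,1]^n: None = free coordinate,   *)
(* Some b = coordinate fixed to b.                                     *)
Definition face (n : nat) := 'I_n -> option bool.

Definition in_face {R : realType} {n : nat} (c : face n) (x : 'rV[R]_n) :=
  forall i, match c i with
            | None => 0 <= x ord0 i <= 1
            | Some b => x ord0 i = (if b then 1 else 0)
            end.

Definition cubeF (n : nat) : set (face n) := setT.
Definition bdryF (n : nat) : set (face n) := [set c | exists i, c i <> None].

Definition realiz (R : realType) {n : nat} (F : set (face n)) : set 'rV[R]_n :=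
  [set x | exists2 c, F c & in_face c x].

Definition vertex {R : realType} {n : nat} (x : 'rV[R]_n) :=
  forall i, x ord0 i = 0 \/ x ord0 i = 1.

Definition zero_n (R : realType) (n : nat) : 'rV[R]_n := const_mx 0.
Definition one_n (R : realType) (n : nat) : 'rV[R]_n := const_mx 1.

(* tame d-path of the sub-complex F, of length L: a continuous map    *)
(* [0,L] -> |F| which is a Moore composition of d-paths of cubes of F *)
(* (i.e. pieces lying in a cube c of F, nondecreasing in each         *)
(* coordinate), the subdivision points being mapped to vertices.       *)
Definition tame_dpath {R : realType} {n : nat} (F : set (face n)) {L : R}
  (g : Ival L -> 'rV[R]_n) :=
  cont (@Itop R L) open g /\
  exists (k : nat) (tt : nat -> R),
    [/\ tt 0%N = 0, tt k = L,
        (forall i, (i < k)%N -> tt i <= tt i.+1),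
        (forall i, (i < k)%N -> exists2 c, F c &
            (forall s, tt i <= sval s <= tt i.+1 -> in_face c (g s)) /\
            (forall s u : Ival L, tt i <= sval s -> sval s <= sval u -> sval u <= tt i.+1 ->
               forall j, g s ord0 j <= g u ord0 j)) &
        (forall i, (i <= k)%N -> forall s, sval s = tt i -> vertex (g s))].

Definition from_to {R : realType} {n : nat} {L : R} (g : Ival L -> 'rV[R]_n)
  (a b : 'rV[R]_n) :=
  (forall s, sval s = 0 -> g s = a) /\ (forall s, sval s = L -> g s = b).

(* natural: the L1-arc length of g restricted to [0,t] equals t *)
Definition natural {R : realType} {n : nat} {L : R} (g : Ival L -> 'rV[R]_n) :=
  forall s t : Ival L, sval s = 0 -> \sum_i `|g t ord0 i - g s ord0 i| = sval t.

Definition regular {R : realType} {n : nat} {L : R} (g : Ival L -> 'rV[R]_n) :=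
  forall s t : Ival L, sval s < sval t -> exists u : Ival L, sval s <= sval u <= sval t /\ g u <> g s.

Definition Nset (R : realType) {n : nat} (F : set (face n))
  : set (Ival (n%:R : R) -> 'rV[R]_n) :=
  [set g | [/\ tame_dpath F g, natural g & from_to g (zero_n R n) (one_n R n)]].

Definition Nsp (R : realType) {n : nat} (F : set (face n)) :=
  subsp R (Nset R F) (TOPsp (n%:R : R) open (realiz R F)).

Definition Gset {R : realType} (l : R) (n : nat) : set (Ival l -> Ival (n%:R : R)) :=
  [set phi | (forall s t : Ival l, sval s <= sval t -> sval (phi s) <= sval (phi t)) /\
     exists psi : Ival (n%:R : R) -> Ival l,
       [/\ cancel phi psi, cancel psi phi,
           cont (@Itop R l) (@Itop R n%:R) phi & cont (@Itop R n%:R) (@Itop R l) psi]].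

Definition Gsp {R : realType} (l : R) (n : nat) :=
  subsp R (Gset l n) (TOPsp l (@Itop R n%:R) setT).

Definition Ptop (R : realType) {n : nat} (F : set (face n))
  : set (Ival (1 : R) -> 'rV[R]_n) :=
  [set g | [/\ tame_dpath F g, regular g, (exists s t, g s <> g t) &
               from_to g (zero_n R n) (one_n R n)]].

Definition Ptopsp (R : realType) {n : nat} (F : set (face n)) :=
  subsp R (Ptop R F) (TOPsp (1 : R) open (realiz R F)).

Lemma toI1_subproof {R : realType} (x : R) :
  (0 <= Num.max 0 (Num.min x 1) <= 1).
Proof.
by rewrite le_max lexx /= ge_max ler01 /= ge_min lexx orbT.
Qed.

Definition toI1 {R : realType} (x : R) : Ival (1 : R) :=
  exist _ (Num.max 0 (Num.min x 1)) (toI1_subproof x).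

Definition Plset {R : realType} (l : R) {n : nat} (F : set (face n))
  : set (Ival l -> 'rV[R]_n) :=
  [set d | exists2 g, Ptop R F g & forall t, d t = g (toI1 (sval t / l))].

Definition Plsp {R : realType} (l : R) {n : nat} (F : set (face n)) :=
  subsp R (Plset l F) (TOPsp l open (realiz R F)).

Definition compose_map {A B C : Type} (p : (A -> B) * (B -> C)) : A -> C :=
  p.2 \o p.1.

From Pilot Require Import Defs.
From HB Require Import structures.
From mathcomp Require Import all_boot all_order all_algebra.
From mathcomp Require Import all_classical all_reals all_analysis.
From mathcomp Require Import finmap.
From mathcomp Require Import lra.
Import Order.TTheory GRing.Theory Num.Theory.
Import numFieldNormedType.Exports.
Local Open Scope classical_set_scope.
Local Open Scope ring_scope.
Set Implicit Arguments.
Unset Strict Implicit.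
Unset Printing Implicit Defensive.

(* A path [d] of [Plset l F] is coordinatewise nondecreasing and, being regular,
   moves some coordinate on every nondegenerate interval; so its L1 arc length
   [t |-> \sum_j d_j t] is a continuous strictly increasing surjection [[0,l] -> [0,n]],
   an element [phi] of [G(l,n)], and [d] reparametrized by arc length is a natural
   path [g] with [d = g \o phi].  Conversely a natural path has arc length [t] at
   time [t], hence is injective and 1-Lipschitz, so [(phi, g)] is recovered from
   [g \o phi].  All topologies in sight are Delta-kelleyfications, so continuity
   need only be tested on maps out of simplices; there the compact-open topology on
   maps [[0,L] -> V] agrees with uniform convergence, for which decomposition and
   composition are continuous by the Lipschitz bounds above. *)

Section Intervals.
Variable R : realType.

Lemma Ival_inj (L : R) (a b : Ival L) : sval a = sval b -> a = b.
Proof.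
case: a b => [a Ha] [b Hb] /= E; subst b; congr exist; exact: bool_irrelevance.
Qed.

Lemma Ival_ge0 (L : R) (a : Ival L) : 0 <= sval a.
Proof. by case: a => a /= /andP[]. Qed.

Lemma Ival_leL (L : R) (a : Ival L) : sval a <= L.
Proof. by case: a => a /= /andP[]. Qed.

Lemma clampI_subproof (L : R) (hL : 0 <= L) (r : R) :
  0 <= Num.max 0 (Num.min r L) <= L.
Proof. by rewrite le_max lexx /= ge_max hL ge_min lexx orbT. Qed.

Definition clampI (L : R) (hL : 0 <= L) (r : R) : Ival L :=
  exist _ (Num.max 0 (Num.min r L)) (clampI_subproof hL r).

Lemma clampIE (L : R) (hL : 0 <= L) (r : R) : 0 <= r <= L -> sval (clampI hL r) = r.
Proof. by move=> /andP[r0 rL] /=; rewrite (min_l rL) (max_r r0). Qed.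

Lemma clampI_lip (L : R) (hL : 0 <= L) (r r0 : R) :
  `|sval (clampI hL r) - sval (clampI hL r0)| <= `|r - r0|.
Proof.
have h1 := ler_norm (r - r0); have h2 := ler_norm (r0 - r); rewrite distrC in h2.
rewrite /= ler_norml; apply/andP; split.
all: case: (leP r L) => a; rewrite ?(min_l a) ?(min_r (ltW a));
     case: (leP r0 L) => b; rewrite ?(min_l b) ?(min_r (ltW b));
     try (case: (leP 0 r) => c; rewrite ?(max_r c) ?(max_l (ltW c)));
     try (case: (leP 0 r0) => c'; rewrite ?(max_r c') ?(max_l (ltW c')));
     try (case: (leP 0 L) => c''; rewrite ?(max_r c'') ?(max_l (ltW c'')));
     lra.
Qed.

Lemma Ival_image_segment (L : R) (hL : 0 <= L) :
  [set sval t | t in [set: Ival L]] = `[0, L]%classic.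
Proof.
apply/seteqP; split => r.
  by move=> [t _ <-]; rewrite /= in_itv /= Ival_ge0 Ival_leL.
by rewrite /= in_itv /= => rL; exists (clampI hL r) => //; exact: clampIE.
Qed.

Lemma Icompact_closed_ball (L : R) (hL : 0 <= L) (c r : R) :
  0 < r -> @Icompact R L [set t : Ival L | `|sval t - c| <= r].
Proof.
move=> r0; rewrite /Icompact /=.
suff -> : [set sval t | t in [set t : Ival L | `|sval t - c| <= r]] =
          `[0, L]%classic `&` closed_ball c r.
  by apply: compact_closedI; [exact: segment_compact | exact: closed_ball_closed].
rewrite closed_ballE //; apply/seteqP; split => x.
  move=> [t tC <-]; split; first by rewrite /= in_itv /= Ival_ge0 Ival_leL.
  by rewrite /closed_ball_ /= distrC.
rewrite /= in_itv /= => -[xL xC]; exists (clampI hL x); last exact: clampIE.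
by change (`|sval (clampI hL x) - c| <= r); rewrite clampIE // distrC.
Qed.

Definition Icontinuous {V : normedModType R} {L : R} (f : Ival L -> V) :=
  forall a (e : R), 0 < e -> exists2 d : R, 0 < d &
    forall t, `|sval t - sval a| < d -> `|f t - f a| < e.

Lemma IcontinuousP (V : normedModType R) (L : R) (f : Ival L -> V) :
  cont (@Itop R L) open f <-> Icontinuous f.
Proof.
split.
- move=> cf a e e0.
  have [Op [oO E]] := cf _ (ball_open (f a) e).
  have Oa : Op (sval a).
    have : (f @^-1` ball (f a) e) a by exact: ballxx.
    by rewrite E.
  case/nbhs_ballP: (oO _ Oa) => d /= d0 Hd.
  exists d => // t td.
  have : (f @^-1` ball (f a) e) t by rewrite E /=; apply: Hd; rewrite -ball_normE /= distrC.
  by rewrite /= -ball_normE /= distrC.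
- move=> cf U oU.
  exists [set r | exists (t : Ival L) (d : R),
    [/\ 0 < d, (forall t', `|sval t' - sval t| < d -> U (f t')) & `|r - sval t| < d]].
  split.
  + move=> r [t [d [d0 Hd rd]]].
    apply/nbhs_ballP; exists (d - `|r - sval t|); first by rewrite /= subr_gt0.
    move=> y; rewrite -ball_normE /= => yr; exists t, d; split => //.
    rewrite -(subrKA r) (le_lt_trans (ler_normD _ _)) //.
    by rewrite -ltrBrDr distrC.
  + apply/seteqP; split => t /=; last by case=> t0 [d [d0 Hd rd]]; apply: Hd.
    move=> Ut; move: oU; rewrite openE => oU.
    case/nbhs_ballP: (oU _ Ut) => e /= e0 He.
    have [d d0 Hd] := cf t e e0.
    exists t, d; split => //; last by rewrite subrr normr0.
    by move=> t' /Hd ft; apply: He; rewrite -ball_normE /= distrC.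
Qed.

Lemma cont_ItopE (L L' : R) (f : Ival L -> Ival L') :
  cont (@Itop R L) (@Itop R L') f <-> cont (@Itop R L) open (fun t => sval (f t)).
Proof.
split; first by move=> cf Op oO; exact: (cf [set t | Op (sval t)] (ex_intro _ Op (conj oO erefl))).
by move=> cf U [Op [oO ->]]; exact: cf.
Qed.

Lemma Itop_preimage (L : R) (Op : set R^o) :
  open Op -> @Itop R L ((fun t : Ival L => sval t : R^o) @^-1` Op).
Proof. by move=> oO; exists Op. Qed.

Lemma Itop_preimageP (L : R) U : @Itop R L U ->
  exists2 Op : set R^o, open Op & U = (fun t : Ival L => sval t : R^o) @^-1` Op.
Proof. by move=> [Op [oO ->]]; exists Op. Qed.

Lemma toI1E (x : R) : 0 <= x <= 1 -> sval (toI1 x) = x.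
Proof. by move=> /andP[x0 x1] /=; rewrite (min_l x1) (max_r x0). Qed.

End Intervals.

Definition nondecr {R : realType} {L L' : R} (f : Ival L -> Ival L') :=
  forall s t, sval s <= sval t -> sval (f s) <= sval (f t).

Section NondecreasingBijection.
Variables (R : realType) (L L' : R) (f : Ival L -> Ival L') (g : Ival L' -> Ival L).
Hypotheses (fK : cancel f g) (gK : cancel g f) (f_nondecr : nondecr f).

Lemma nondecr_inv : nondecr g.
Proof.
move=> a b ab; rewrite leNgt; apply/negP => ba.
have := f_nondecr (ltW ba); rewrite !gK => ba'.
have eab : a = b by apply: Ival_inj; apply/eqP; rewrite eq_le ab ba'.
by move: ba; rewrite eab ltxx.
Qed.

Lemma nondecr_bij_lt s t : sval s < sval t -> sval (f s) < sval (f t).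
Proof.
move=> st; rewrite lt_neqAle f_nondecr ?(ltW st) // andbT.
apply/negP => /eqP E.
have est : s = t by rewrite -(fK s) -(fK t); congr g; apply: Ival_inj.
by move: st; rewrite est ltxx.
Qed.

Lemma codom_ge0 (s : Ival L) : 0 <= L'.
Proof. exact: le_trans (Ival_ge0 (f s)) (Ival_leL (f s)). Qed.

Lemma nondecr_bij0 s : sval s = 0 -> sval (f s) = 0.
Proof.
move=> s0; have hL' := codom_ge0 s; pose z := clampI hL' 0.
have z0 : sval z = 0 by rewrite clampIE // lexx hL'.
have := f_nondecr (s := s) (t := g z); rewrite gK s0 z0 => /(_ (Ival_ge0 _)) le0.
by apply/eqP; rewrite eq_le le0 Ival_ge0.
Qed.

Lemma nondecr_bijL s : sval s = L -> sval (f s) = L'.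
Proof.
move=> sL; have hL' := codom_ge0 s; pose z := clampI hL' L'.
have zL : sval z = L' by rewrite clampIE // hL' lexx.
have := f_nondecr (s := g z) (t := s); rewrite gK sL zL => /(_ (Ival_leL _)) le0.
by apply/eqP; rewrite eq_le le0 Ival_leL.
Qed.

(* [d] is the distance from [a] to the preimage of [f a + e/2]. *)
Lemma nondecr_bij_right a e : 0 < e -> exists2 d : R, 0 < d &
  forall t, sval a <= sval t -> sval t < sval a + d -> sval (f t) < sval (f a) + e.
Proof.
move=> e0; have hL' := codom_ge0 a.
have e20 : 0 < e / 2 by rewrite divr_gt0.
have e2e : e / 2 < e by rewrite ltr_pdivrMr // ltr_pMr // ltr1n.
have y0 : 0 <= sval (f a) by apply: Ival_ge0.
have [yL|yL] := leP (sval (f a) + e / 2) L'; last first.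
  exists 1 => // t _ _; apply: le_lt_trans (Ival_leL _) _.
  by apply: lt_trans yL _; rewrite ltrD2l.
pose z := clampI hL' (sval (f a) + e / 2).
have zE : sval z = sval (f a) + e / 2 by rewrite clampIE // yL addr_ge0 // ltW.
have az : sval a < sval (g z).
  by rewrite ltNge; apply/negP => /f_nondecr; rewrite gK zE gerDl lt_geF.
exists (sval (g z) - sval a); first by rewrite subr_gt0.
move=> t _; rewrite addrC subrK => /ltW /f_nondecr; rewrite gK zE => h.
by apply: le_lt_trans h _; rewrite ltrD2l.
Qed.

Lemma nondecr_bij_left a e : 0 < e -> exists2 d : R, 0 < d &
  forall t, sval t <= sval a -> sval a - d < sval t -> sval (f a) - e < sval (f t).
Proof.
move=> e0; have hL' := codom_ge0 a.
have e20 : 0 < e / 2 by rewrite divr_gt0.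
have e2e : e / 2 < e by rewrite ltr_pdivrMr // ltr_pMr // ltr1n.
have yL : sval (f a) <= L' by apply: Ival_leL.
have [y0|y0] := leP 0 (sval (f a) - e / 2); last first.
  exists 1 => // t _ _; apply: lt_le_trans (Ival_ge0 _).
  by apply: le_lt_trans y0; rewrite lerD2l lerN2 ltW.
pose z := clampI hL' (sval (f a) - e / 2).
have zE : sval z = sval (f a) - e / 2.
  by rewrite clampIE // y0 (le_trans _ yL) // gerBl ltW.
have za : sval (g z) < sval a.
  rewrite ltNge; apply/negP => /f_nondecr; rewrite gK zE.
  by rewrite lerBrDr gerDl leNgt e20.
exists (sval a - sval (g z)); first by rewrite subr_gt0.
move=> t _; rewrite opprB addrC subrK => /ltW /f_nondecr; rewrite gK zE => h.
by apply: lt_le_trans h; rewrite ltrD2l ltrN2.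
Qed.

Lemma nondecr_bij_cont : cont (@Itop R L) (@Itop R L') f.
Proof.
apply/cont_ItopE/IcontinuousP => a e e0.
have [du du0 Hu] := nondecr_bij_right a e0.
have [dl dl0 Hl] := nondecr_bij_left a e0.
exists (Num.min du dl); first by rewrite lt_min du0 dl0.
move=> t; rewrite lt_min !ltr_norml => /andP[/andP[tu1 tu2] /andP[tl1 tl2]] /=.
have [at_|ta] := leP (sval a) (sval t).
- have h1 := f_nondecr at_.
  have h2 : sval t < sval a + du by lra.
  have h3 := Hu t at_ h2.
  apply/andP; split; lra.
- have h1 := f_nondecr (ltW ta).
  have h2 : sval a - dl < sval t by lra.
  have h3 := Hl t (ltW ta) h2.
  apply/andP; split; lra.
Qed.

End NondecreasingBijection.

Section SimplexTopology.
Variable R : realType.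

Lemma open_inP (m : nat) (D A : set 'rV[R]_m) :
  open_in D A <-> (forall x0, D x0 -> A x0 -> exists2 d : R, 0 < d &
     forall x, D x -> `|x - x0| < d -> A x).
Proof.
split.
- move=> [Op [oO E]] x0 Dx0 Ax0.
  have [_ Ox0] : (D `&` Op) x0 by rewrite -E.
  case/nbhs_ballP: (oO x0 Ox0) => e /= e0 He.
  exists e => // x Dx xx0.
  have : (D `&` Op) x by split => //; apply: He; rewrite -ball_normE /= distrC.
  by rewrite -E => -[].
- move=> H.
  exists [set x | exists x0 d, [/\ D x0, A x0, 0 < d,
    (forall y, D y -> `|y - x0| < d -> A y) & `|x - x0| < d]].
  split.
  + move=> x [x0 [d [Dx0 Ax0 d0 Hd xd]]].
    apply/nbhs_ballP; exists (d - `|x - x0|); first by rewrite /= subr_gt0.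
    move=> y; rewrite -ball_normE /= => yx; exists x0, d; split => //.
    rewrite -(subrKA x) (le_lt_trans (ler_normD _ _)) //.
    by rewrite -ltrBrDr distrC.
  + apply/seteqP; split => x [Dx Ax]; split => //.
      have [d d0 Hd] := H x Dx Ax.
      by exists x, d; split => //; rewrite subrr normr0.
    by case: Ax => x0 [d [Dx0 _ _ Hd xd]]; apply: Hd.
Qed.

Lemma open_in_ext (k : nat) (D A B : set 'rV[R]_k) :
  (forall x, D x -> (A x <-> B x)) -> open_in D A -> open_in D B.
Proof.
move=> AB [Op [oO E]]; exists Op; split => //; rewrite -E.
by apply/seteqP; split => x [Dx h]; split => //; apply/(AB x Dx).
Qed.

Definition cont_on {k : nat} {X : Type} (D : set 'rV[R]_k) (s : 'rV[R]_k -> X)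
  (t : set (set X)) := forall V, t V -> open_in D (s @^-1` V).

Lemma cont_on_kelley (X : Type) (m : nat) (S : set X) (t : set (set X))
  (s : 'rV[R]_m.+1 -> X) :
  (forall V, t V -> V `<=` S) -> (forall x, simplex R m x -> S (s x)) ->
  cont_on (simplex R m) s (kelley R S t) <-> cont_on (simplex R m) s t.
Proof.
move=> tS sS; split; last by move=> cs U [_ HU]; apply: HU.
move=> cs V tV; apply: cs; split; first exact: tS.
by move=> m' s' _ hs'; apply: hs'.
Qed.

Lemma cont_on_subspace (X : Type) (k : nat) (D : set 'rV[R]_k) (P : set X)
  (t : set (set X)) (s : 'rV[R]_k -> X) :
  (forall x, D x -> P (s x)) -> cont_on D s (Defs.subspace P t) <-> cont_on D s t.
Proof.
move=> sP; split => cs.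
- move=> V tV; have := cs (P `&` V) (ex_intro _ V (conj tV erefl)).
  by apply: open_in_ext => x Dx; split; [case | split => //; apply: sP].
- move=> _ [V [tV ->]]; apply: open_in_ext (cs V tV) => x Dx.
  by split; [split => //; apply: sP | case].
Qed.

Lemma kelley_sub (X : Type) (S : set X) (t : set (set X)) V : kelley R S t V -> V `<=` S.
Proof. by case. Qed.

Lemma subspace_sub (X : Type) (P : set X) (t : set (set X)) V : Defs.subspace P t V -> V `<=` P.
Proof. by move=> [V' [_ ->]] x []. Qed.

Lemma kelley_setT (X : Type) (S : set X) (t : set (set X)) : kelley R S t S.
Proof.
split => // m s sS _; exists setT; split; first exact: openT.
by apply/seteqP; split => x [Dx _]; split => //; apply: sS.
Qed.

Lemma cont_on_subspace_kelley (X : Type) (m : nat) (P C : set X) (co : set (set X))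
  (s : 'rV[R]_m.+1 -> X) :
  P `<=` C -> (forall x, simplex R m x -> P (s x)) ->
  cont_on (simplex R m) s (Defs.subspace P (kelley R C (Defs.subspace C co))) <->
  cont_on (simplex R m) s co.
Proof.
move=> PC sP; have sC x : simplex R m x -> C (s x) by move/sP/PC.
apply: iff_trans (cont_on_subspace _ sP) _.
apply: iff_trans (cont_on_kelley (@subspace_sub X C co) sC) _.
exact: cont_on_subspace.
Qed.

Lemma cont_on_subsp (X : Type) (m : nat) (P C : set X) (co : set (set X))
  (s : 'rV[R]_m.+1 -> X) :
  P `<=` C -> (forall x, simplex R m x -> P (s x)) ->
  cont_on (simplex R m) s (kelley R P (Defs.subspace P (kelley R C (Defs.subspace C co)))) <->
  cont_on (simplex R m) s co.
Proof.
move=> PC sP; apply: iff_trans (cont_on_subspace_kelley co PC sP).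
exact: (cont_on_kelley (@subspace_sub X P _) sP).
Qed.

Lemma cont_on_pair (X Y : Type) (k : nat) (D : set 'rV[R]_k)
  (S1 : Defs.space X) (S2 : Defs.space Y) (s : 'rV[R]_k -> X * Y) :
  cont_on D (fun x => (s x).1) S1.2 -> cont_on D (fun x => (s x).2) S2.2 ->
  cont_on D s (prod_top S1 S2).
Proof.
move=> c1 c2 W [Wsub HW]; apply/open_inP => x0 Dx0 Wx0.
have [U [V [oU oV Ux0 Vx0 inc]]] := HW _ Wx0.
have [d1 d10 H1] := (open_inP _ _).1 (c1 U oU) x0 Dx0 Ux0.
have [d2 d20 H2] := (open_inP _ _).1 (c2 V oV) x0 Dx0 Vx0.
exists (Num.min d1 d2); first by rewrite lt_min d10 d20.
by move=> x Dx; rewrite lt_min => /andP[h1 h2]; apply: inc; [exact: H1 | exact: H2].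
Qed.

Lemma cont_on_fst (X Y : Type) (k : nat) (D : set 'rV[R]_k)
  (S1 : Defs.space X) (S2 : Defs.space Y) (s : 'rV[R]_k -> X * Y) :
  (forall U, S1.2 U -> U `<=` S1.1) -> S2.2 S2.1 -> (forall x, D x -> S2.1 (s x).2) ->
  cont_on D s (prod_top S1 S2) -> cont_on D (fun x => (s x).1) S1.2.
Proof.
move=> S1sub S2T sS2 cs U oU.
have : prod_top S1 S2 (U `*` S2.1).
  split; first by move=> p [p1 p2]; split => //; apply: S1sub oU _ p1.
  by move=> p [p1 p2]; exists U, S2.1; split => // q q1 q2; split.
move/cs; apply: open_in_ext => x Dx; split; first by case.
by move=> h; split => //; apply: sS2.
Qed.

Lemma cont_on_snd (X Y : Type) (k : nat) (D : set 'rV[R]_k)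
  (S1 : Defs.space X) (S2 : Defs.space Y) (s : 'rV[R]_k -> X * Y) :
  (forall U, S2.2 U -> U `<=` S2.1) -> S1.2 S1.1 -> (forall x, D x -> S1.1 (s x).1) ->
  cont_on D s (prod_top S1 S2) -> cont_on D (fun x => (s x).2) S2.2.
Proof.
move=> S2sub S1T sS1 cs U oU.
have : prod_top S1 S2 (S1.1 `*` U).
  split; first by move=> p [p1 p2]; split => //; apply: S2sub oU _ p2.
  by move=> p [p1 p2]; exists S1.1, U; split => // q q1 q2; split.
move/cs; apply: open_in_ext => x Dx; split; first by case.
by move=> h; split => //; apply: sS1.
Qed.

End SimplexTopology.

Section CompactOpenUniform.
Variable R : realType.

Lemma seq_common_radius (I : eqType) (s : seq I) (P : I -> R -> Prop) :
  (forall i d d', P i d -> 0 < d' <= d -> P i d') ->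
  (forall i, i \in s -> exists2 d, 0 < d & P i d) ->
  exists2 d, 0 < d & forall i, i \in s -> P i d.
Proof.
move=> Pmon; elim: s => [|i s IH] H; first by exists 1.
have [d d0 Hd] := H i (mem_head _ _).
have [d' d'0 Hd'] : exists2 d', 0 < d' & forall j, j \in s -> P j d'.
  by apply: IH => j js; apply: H; rewrite in_cons js orbT.
exists (Num.min d d'); first by rewrite lt_min d0 d'0.
move=> j; rewrite in_cons => /orP[/eqP->|js].
  by apply: (Pmon i d _ Hd); rewrite lt_min d0 d'0 ge_min lexx.
by apply: (Pmon j d' _ (Hd' j js)); rewrite lt_min d0 d'0 ge_min lexx orbT.
Qed.

Lemma compact_margin (V : normedModType R) (L : R) (C : set (Ival L))
  (g : Ival L -> V) (Op : set V) :
  compact [set sval t | t in C] -> Icontinuous g -> open Op -> (forall a, C a -> Op (g a)) ->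
  exists2 eps : R, 0 < eps & forall a, C a -> forall y, `|y - g a| < eps -> Op y.
Proof.
move=> cC cg oO CO; rewrite compact_cover in cC.
pose D := [set p : R * R * R | exists a, [/\ C a, sval a = p.1.1, 0 < p.1.2, 0 < p.2 &
   ((forall y, `|y - g a| < p.2 *+ 2 -> Op y) /\
   (forall t, `|sval t - sval a| < p.1.2 -> `|g t - g a| < p.2))]].
have [] := cC _ D (fun p => ball p.1.1 p.1.2).
- by move=> p _; exact: ball_open.
- move=> r [a Ca <-]; move: oO; rewrite openE => oO.
  case/nbhs_ballP: (oO _ (CO a Ca)) => e /= e0 He.
  have e20 : 0 < e / 2 by rewrite divr_gt0.
  have [d d0 Hd] := cg a _ e20.
  exists (sval a, d, e / 2) => //; last exact: ballxx.
  exists a; split => //; split => //= y hy; apply: He.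
  by rewrite -ball_normE /= distrC -(mulr_natr (e / 2)) divfK ?pnatr_eq0 in hy *.
move=> D' D'D0 cov.
have D'D i : i \in D' -> D i by move/D'D0/set_mem.
have [eps eps0 Heps] := seq_common_radius (s := enum_fset D')
  (P := fun p eps => eps <= p.2)
  (fun i d d' h hd => le_trans (elimT andP hd).2 h)
  (fun i iD => ex_intro2 _ _ i.2
     (match D'D i iD with ex_intro a (And5 _ _ _ h _) => h end) (lexx _)).
exists eps => // a Ca y ya.
have [p /= pD' pa] := cov (sval a) (ex_intro2 _ _ a Ca erefl).
have [a' [Ca' a'p p2 p3 [Hy Hg]]] := D'D p pD'.
apply: Hy.
have ga' : `|g a - g a'| < p.2 by apply: Hg; rewrite a'p distrC.
rewrite -(subrKA (g a)) (le_lt_trans (ler_normD _ _)) // mulr2n ltrD //.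
exact: lt_le_trans ya (Heps p pD').
Qed.

Lemma Icontinuous_fin_cover (V : normedModType R) (L : R) (hL : 0 <= L)
  (f : Ival L -> V) (e : R) : Icontinuous f -> 0 < e ->
  exists k (a : 'I_k -> Ival L) (r : 'I_k -> R),
    [/\ forall j, 0 < r j,
        forall t : Ival L, exists j, `|sval t - sval (a j)| < r j &
        forall j (t : Ival L), `|sval t - sval (a j)| <= r j -> `|f t - f (a j)| < e].
Proof.
move=> cf e0.
have cK : cover_compact [set sval t | t in [set: Ival L]].
  by rewrite -compact_cover Ival_image_segment //; exact: segment_compact.
pose Dc := [set p : R * R | exists a : Ival L, [/\ sval a = p.1, 0 < p.2 &
   forall t, `|sval t - sval a| <= p.2 -> `|f t - f a| < e]].
have [] := cK _ Dc (fun p => ball p.1 p.2).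
- by move=> p _; exact: ball_open.
- move=> r [b _ <-].
  have [d d0 Hd] := cf b e e0.
  have d20 : 0 < d / 2 by rewrite divr_gt0.
  exists (sval b, d / 2) => //=; last exact: ballxx.
  exists b; split => // t td; apply: Hd; apply: le_lt_trans td _.
  by rewrite ltr_pdivrMr // ltr_pMr // ltr1n.
move=> D' D'D0 cov.
pose s := enum_fset D'.
pose p (j : 'I_(size s)) := nth (0, 0) s j.
have pD j : Dc (p j) by apply/set_mem/D'D0; exact: mem_nth.
pose a j := clampI hL (p j).1.
have pa j : sval (a j) = (p j).1.
  by rewrite /a; have [b [<- _ _]] := pD j; rewrite clampIE // Ival_ge0 Ival_leL.
exists (size s), a, (fun j => (p j).2); split.
- by move=> j; have [b []] := pD j.
- move=> t; have [q qD' qt] := cov (sval t) (ex_intro2 _ _ t I erefl).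
  have qs : q \in s by [].
  have jlt : (index q s < size s)%N by rewrite index_mem.
  exists (Ordinal jlt); rewrite pa /p nth_index //.
  by move: qt; rewrite -ball_normE /= distrC.
- move=> j t; have [b [b1 _ Hb]] := pD j.
  have -> : a j = b by apply: Ival_inj; rewrite pa b1.
  exact: Hb.
Qed.

Definition sup_cont {k : nat} {L : R} {Y : Type} {V : normedModType R}
  (D : set 'rV[R]_k) (pi : Y -> V) (h : 'rV[R]_k -> Ival L -> Y) :=
  forall x0, D x0 -> forall e, 0 < e -> exists2 d : R, 0 < d &
    forall x, D x -> `|x - x0| < d -> forall t, `|pi (h x t) - pi (h x0 t)| < e.

Section SupCompactOpen.
Variables (V : normedModType R) (Y : Type) (tY : set (set Y)) (pi : Y -> V).
Variables (L : R) (k : nat) (D : set 'rV[R]_k) (h : 'rV[R]_k -> Ival L -> Y).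
Hypothesis h_cont : forall x, D x -> Icontinuous (pi \o h x).

Lemma sup_cont_compact_open :
  (forall U, tY U -> exists2 Op, open Op & U = pi @^-1` Op) ->
  sup_cont D pi h -> cont_on D h (Defs.compact_open (@Icompact R L) tY).
Proof.
move=> tY_open uc W coW; apply/open_inP => x0 Dx0 Wx0.
have [kk [Vs [Vsub Vx0 Vincl]]] := coW _ Wx0.
suff H i : i \in enum 'I_kk -> exists2 d : R, 0 < d &
    forall x, D x -> `|x - x0| < d -> Vs i (h x).
  have [d d0 Hd] := seq_common_radius
    (P := fun i d => forall x, D x -> `|x - x0| < d -> Vs i (h x))
    (fun i d d' H hd x Dx xd => H x Dx (lt_le_trans xd (elimT andP hd).2)) H.
  by exists d => // x Dx xd; apply: Vincl => i; apply: Hd; rewrite ?mem_enum.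
move=> _; have [C [U [cC tU EV]]] := Vsub i.
have [Op oO EU] := tY_open _ tU.
have CO a : C a -> Op (pi (h x0 a)).
  by move=> Ca; have := Vx0 i; rewrite EV /= => /(_ a Ca); rewrite EU.
have [eps eps0 Heps] := compact_margin cC (h_cont Dx0) oO CO.
have [d d0 Hd] := uc x0 Dx0 eps eps0.
exists d => // x Dx xd; rewrite EV /= => a Ca; rewrite EU /=.
exact: Heps Ca _ (Hd x Dx xd a).
Qed.

Lemma compact_open_sup_cont :
  (forall Op, open Op -> tY (pi @^-1` Op)) ->
  cont_on D h (Defs.compact_open (@Icompact R L) tY) -> sup_cont D pi h.
Proof.
move=> tY_open ch x0 Dx0 e e0.
have [hL|Lneg] := leP 0 L; last first.
  exists 1 => // x _ _ t; exfalso.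
  by move: (le_trans (Ival_ge0 t) (Ival_leL t)); rewrite leNgt Lneg.
have e20 : 0 < e / 2 by rewrite divr_gt0.
have [kk [a [r [r0 cover osc]]]] := Icontinuous_fin_cover hL (h_cont Dx0) e20.
pose C j := [set t : Ival L | `|sval t - sval (a j)| <= r j].
pose Vj j := [set f : Ival L -> Y | forall t, C j t -> ball (pi (h x0 (a j))) (e / 2) (pi (f t))].
pose W := [set f | forall j, Vj j f].
have coW : Defs.compact_open (@Icompact R L) tY W.
  move=> f Wf; exists kk, Vj; split => // j.
  exists (C j), (pi @^-1` ball (pi (h x0 (a j))) (e / 2)); split => //.
    exact: Icompact_closed_ball.
  exact/tY_open/ball_open.
have Wx0 : W (h x0) by move=> j t tC; rewrite -ball_normE /= distrC; exact: osc.
have [d d0 Hd] := (open_inP _ _).1 (ch W coW) x0 Dx0 Wx0.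
exists d => // x Dx xd t.
have [j tj] := cover t.
have h1 := Hd x Dx xd j t (ltW tj); rewrite -ball_normE /= in h1.
have h2 : `|pi (h x0 t) - pi (h x0 (a j))| < e / 2 by exact: osc (ltW tj).
rewrite -(subrKA (pi (h x0 (a j)))) (le_lt_trans (ler_normD _ _)) //.
by rewrite (splitr e) ltrD // distrC.
Qed.

End SupCompactOpen.

End CompactOpenUniform.

Section TamePaths.
Variable R : realType.

Lemma rV_norm_coord_le (n : nat) (x : 'rV[R]_n) j : `|x ord0 j| <= `|x|.
Proof.
rewrite [in leRHS]/Num.Def.normr /= mx_normrE.
by apply/bigmax_geP; right => /=; exists (ord0, j).
Qed.

Lemma rV_norm_le (n : nat) (x : 'rV[R]_n) (c : R) :
  0 <= c -> (forall j, `|x ord0 j| <= c) -> `|x| <= c.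
Proof.
move=> c0 h; rewrite [in leLHS]/Num.Def.normr /= mx_normrE.
by apply/bigmax_leP; split => // -[i j] _ /=; rewrite (ord1 i); apply: h.
Qed.

Lemma ler_sum_term (n : nat) (u : 'I_n -> R) j :
  (forall i, 0 <= u i) -> u j <= \sum_i u i.
Proof. by move=> h; rewrite (bigD1 j) //= lerDl sumr_ge0. Qed.

Lemma in_face01 (n : nat) (c : face n) (x : 'rV[R]_n) :
  in_face c x -> forall j, 0 <= x ord0 j <= 1.
Proof. by move=> h j; move: (h j); case: (c j) => [[]|] //= ->; rewrite ?lexx ?ler01. Qed.

Lemma zero_nE (n : nat) j : zero_n R n ord0 j = 0.
Proof. by rewrite mxE. Qed.

Lemma one_nE (n : nat) j : one_n R n ord0 j = 1.
Proof. by rewrite mxE. Qed.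

Lemma zero_n_neq_one_n (n : nat) : (0 < n)%N -> zero_n R n <> one_n R n.
Proof.
move=> n0 /(congr1 (fun m : 'rV[R]_n => m ord0 (Ordinal n0))) /eqP.
by rewrite zero_nE one_nE eq_sym oner_eq0.
Qed.

Section Subdivision.
Variables (tt : nat -> R) (k : nat).
Hypothesis tt_le : forall i, (i < k)%N -> tt i <= tt i.+1.

Lemma subdiv_mono i j : (i <= j)%N -> (j <= k)%N -> tt i <= tt j.
Proof.
elim: j => [|j IH] ij jk; first by move: ij; rewrite leqn0 => /eqP ->.
move: ij; rewrite leq_eqVlt => /orP[/eqP -> //|ij].
exact: le_trans (IH ij (ltnW jk)) (tt_le jk).
Qed.

End Subdivision.

Lemma subdiv_piece (tt : nat -> R) (k : nat) :
  (0 < k)%N -> (forall i, (i < k)%N -> tt i <= tt i.+1) ->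
  forall r, tt 0%N <= r -> r <= tt k -> exists i, (i < k)%N /\ tt i <= r <= tt i.+1.
Proof.
elim: k => [//|k IH] _ h r r0 rk.
have [k0|k0] := eqVneq k 0%N; first by subst k; exists 0%N; rewrite r0 rk.
have [rk'|rk'] := leP r (tt k); last by exists k; rewrite ltnSn (ltW rk') rk.
have [|i [ik hi]] := IH _ (fun i ik => h i (ltnW ik)) r r0 rk'; first by rewrite lt0n.
by exists i; split => //; rewrite ltnW.
Qed.

Lemma subdiv_range (L : R) (k : nat) (tt : nat -> R) :
  tt 0%N = 0 -> tt k = L -> (forall i, (i < k)%N -> tt i <= tt i.+1) ->
  forall i, (i <= k)%N -> 0 <= tt i <= L.
Proof. by move=> t0 tk tm i ik; rewrite -t0 -tk !(subdiv_mono tm) // leq0n. Qed.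

Variables (n : nat) (F : set (face n)).

Lemma tame_dpath_mono (L : R) (g : Ival L -> 'rV[R]_n) :
  tame_dpath F g -> forall s u : Ival L, sval s <= sval u -> forall j, g s ord0 j <= g u ord0 j.
Proof.
move=> [_ [k [tt [t0 tk tm tp tv]]]] s u su.
have hL : 0 <= L by apply: le_trans (Ival_ge0 s) (Ival_leL s).
have range := subdiv_range t0 tk tm.
suff H i : (i <= k)%N -> forall s u : Ival L, sval s <= sval u -> sval u <= tt i ->
   forall j, g s ord0 j <= g u ord0 j.
  by apply: (H k (leqnn k)) => //; rewrite tk; exact: Ival_leL.
elim: i => [|i IH] ik {su}s {}u su ui j.
  have u0 : sval u = 0 by apply/eqP; rewrite eq_le Ival_ge0 andbT; move: ui; rewrite t0.
  have s0 : sval s = 0 by apply/eqP; rewrite eq_le Ival_ge0 andbT; move: su; rewrite u0.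
  by rewrite (Ival_inj (etrans s0 (esym u0))).
have [ui'|ui'] := leP (sval u) (tt i); first exact: IH (ltnW ik) s u su ui' j.
have [c _ [_ Hm]] := tp i ik.
have [si|si] := leP (tt i) (sval s); first exact: Hm.
pose z := clampI hL (tt i).
have zE : sval z = tt i by rewrite clampIE // range // ltnW.
have sz : sval s <= sval z by rewrite zE ltW.
have zi : sval z <= tt i by rewrite zE.
apply: (@le_trans _ _ (g z ord0 j)); first exact: (IH (ltnW ik) s z sz zi j).
by apply: Hm; rewrite ?zE // ltW.
Qed.

Lemma tame_dpath_face (L : R) (g : Ival L -> 'rV[R]_n) :
  tame_dpath F g -> 0 < L -> forall t, exists2 c, F c & in_face c (g t).
Proof.
move=> [_ [k [tt [t0 tk tm tp tv]]]] L0 t.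
have kpos : (0 < k)%N.
  by rewrite lt0n; apply/eqP => k0; move: tk; rewrite k0 t0 => L0'; rewrite -L0' ltxx in L0.
have t0t : tt 0%N <= sval t by rewrite t0 Ival_ge0.
have ttk : sval t <= tt k by rewrite tk Ival_leL.
have [i [ik /andP[h1 h2]]] := subdiv_piece kpos tm t0t ttk.
have [c Fc [Hc _]] := tp i ik.
by exists c => //; apply: Hc; rewrite h1 h2.
Qed.

(* The subdivision is pulled back along [phi]. *)
Lemma tame_dpath_comp (L L' : R) (g : Ival L -> 'rV[R]_n)
  (phi : Ival L' -> Ival L) (psi : Ival L -> Ival L') :
  tame_dpath F g -> cancel phi psi -> cancel psi phi -> nondecr phi ->
  tame_dpath F (g \o phi).
Proof.
move=> [cg [k [tt [t0 tk tm tp tv]]]] phiK psiK mphi.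
have mpsi := nondecr_inv psiK mphi.
split.
  by move=> U oU; exact: (nondecr_bij_cont psiK mphi) _ (cg U oU).
have range := subdiv_range t0 tk tm.
have hL : 0 <= L by have /andP[h1 h2] := range 0%N (leq0n k); exact: le_trans h1 h2.
pose c i := clampI hL (tt i).
have cE i : (i <= k)%N -> sval (c i) = tt i by move=> ik; rewrite clampIE // range.
have phic i : (i <= k)%N -> sval (phi (psi (c i))) = tt i by move=> ik; rewrite psiK cE.
exists k, (fun i => sval (psi (c i))); split.
- by apply: (nondecr_bij0 phiK mpsi); rewrite cE.
- by apply: (nondecr_bijL phiK mpsi); rewrite cE.
- by move=> i ik; apply: mpsi; rewrite (cE i (ltnW ik)) (cE i.+1 ik); exact: tm.
- move=> i ik; have [cc Fc [Hin Hm]] := tp i ik.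
  have lo s : sval (psi (c i)) <= sval s -> tt i <= sval (phi s).
    by move/mphi; rewrite phic // ltnW.
  have hi s : sval s <= sval (psi (c i.+1)) -> sval (phi s) <= tt i.+1.
    by move/mphi; rewrite phic.
  exists cc => //; split; first by move=> s /andP[h1 h2] /=; apply: Hin; rewrite lo // hi.
  by move=> s u h1 h2 h3 j /=; apply: Hm; [exact: lo | exact: mphi | exact: hi].
- move=> i ik s si /=.
  have -> : s = psi (c i) by apply: Ival_inj.
  by apply: (tv i ik); rewrite phic.
Qed.

Section NaturalPaths.
Hypothesis n_gt0 : (0 < n)%N.
Variable g : Ival (n%:R : R) -> 'rV[R]_n.
Hypothesis Ng : Nset R F g.

Lemma Nset_01 t j : 0 <= g t ord0 j <= 1.
Proof.
have [tg _ _] := Ng; have n0 : 0 < (n%:R : R) by rewrite ltr0n.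
have [c _ Hc] := tame_dpath_face tg n0 t.
exact: in_face01 Hc j.
Qed.

Lemma Nset_sum t : \sum_j g t ord0 j = sval t.
Proof.
have [_ ng [f0 _]] := Ng.
pose z := clampI (ler0n R n) 0.
have z0 : sval z = 0 by rewrite clampIE // lexx ler0n.
rewrite -(ng z t z0) (f0 z z0); apply: eq_bigr => j _.
by rewrite zero_nE subr0 ger0_norm //; case/andP: (Nset_01 t j).
Qed.

Lemma Nset_lip a b : `|g a - g b| <= `|sval a - sval b|.
Proof.
have [tg _ _] := Ng.
wlog ab : a b / sval a <= sval b.
  move=> H; have [|ba] := leP (sval a) (sval b); first exact: H.
  by rewrite distrC (distrC (sval a)); apply: H; apply: ltW.
apply: rV_norm_le => // j.
rewrite !mxE !ler0_norm ?subr_le0 ?(tame_dpath_mono tg ab) // !opprB.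
rewrite -Nset_sum -Nset_sum -sumrB.
apply: (ler_sum_term (u := fun i => g b ord0 i - g a ord0 i)) => i.
by rewrite subr_ge0 (tame_dpath_mono tg ab).
Qed.

Lemma Nset_inj : injective g.
Proof. by move=> a b e; apply: Ival_inj; rewrite -Nset_sum -Nset_sum e. Qed.

Lemma Nset_Icontinuous : Icontinuous g.
Proof. by move=> a e e0; exists e => // t te; exact: le_lt_trans (Nset_lip t a) te. Qed.

End NaturalPaths.

End TamePaths.

Section Rescaling.
Variables (R : realType) (l : R).
Hypothesis l_gt0 : 0 < l.
Let hl : 0 <= l := ltW l_gt0.

Definition to_unit (t : Ival l) : Ival (1 : R) := toI1 (sval t / l).
Definition from_unit (u : Ival (1 : R)) : Ival l := clampI hl (l * sval u).

Lemma to_unitE t : sval (to_unit t) = sval t / l.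
Proof.
rewrite toI1E // divr_ge0 ?Ival_ge0 ?(ltW l_gt0) //=.
by rewrite ler_pdivrMr // mul1r Ival_leL.
Qed.

Lemma from_unitE u : sval (from_unit u) = l * sval u.
Proof. by rewrite clampIE // mulr_ge0 ?Ival_ge0 //= ler_piMr ?Ival_leL. Qed.

Lemma to_unitK : cancel to_unit from_unit.
Proof. by move=> t; apply: Ival_inj; rewrite from_unitE to_unitE mulrC divfK ?gt_eqF. Qed.

Lemma from_unitK : cancel from_unit to_unit.
Proof. by move=> u; apply: Ival_inj; rewrite to_unitE from_unitE mulrAC divff ?mul1r ?gt_eqF. Qed.

Lemma to_unit_nondecr : nondecr to_unit.
Proof. by move=> s t st; rewrite !to_unitE ler_pM2r ?invr_gt0. Qed.

Lemma from_unit_nondecr : nondecr from_unit.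
Proof. by move=> s t st; rewrite !from_unitE ler_wpM2l. Qed.

Variables (n : nat) (F : set (face n)).

Lemma Plset_path (d : Ival l -> 'rV[R]_n) : Plset l F d ->
  [/\ tame_dpath F d, regular d & from_to d (zero_n R n) (one_n R n)].
Proof.
move=> [g [tg rg _ [g0 g1]] dE].
have -> : d = g \o to_unit by apply: funext => t; exact: dE.
split.
- exact: tame_dpath_comp tg to_unitK from_unitK to_unit_nondecr.
- move=> s t st.
  have [u [/andP[su ut] hne]] := rg _ _ (nondecr_bij_lt to_unitK to_unit_nondecr st).
  exists (from_unit u); split; last by rewrite /= from_unitK.
  have := from_unit_nondecr su; have := from_unit_nondecr ut.
  by rewrite !to_unitK => -> ->.
- split => s hs /=; first by apply: g0; rewrite to_unitE hs mul0r.
  by apply: g1; rewrite to_unitE hs divff ?gt_eqF.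
Qed.

Lemma Plset_01 (d : Ival l -> 'rV[R]_n) : Plset l F d -> forall t j, 0 <= d t ord0 j <= 1.
Proof.
move=> Pd t j; have [td _ _] := Plset_path Pd.
by have [c _ Hc] := tame_dpath_face td l_gt0 t; exact: in_face01 Hc j.
Qed.

(* A natural path is injective, so [g \o phi] is regular; it is nonconstant since
   [0_n <> 1_n]. *)
Lemma comp_Plset (phi : Ival l -> Ival (n%:R : R)) (g : Ival (n%:R : R) -> 'rV[R]_n) :
  (0 < n)%N -> Gset l n phi -> Nset R F g -> Plset l F (g \o phi).
Proof.
move=> n0 [mphi [psi [phiK psiK _ _]]] Ng.
have [tg _ [g0 g1]] := Ng.
pose th := phi \o from_unit; pose thi := to_unit \o psi.
have thK : cancel th thi by move=> u; rewrite /th /thi /= phiK from_unitK.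
have thiK : cancel thi th by move=> y; rewrite /th /thi /= to_unitK psiK.
have mth : nondecr th by move=> s t st; apply/mphi/from_unit_nondecr.
exists (g \o th); last by move=> t; rewrite /th /= to_unitK.
split.
- exact: tame_dpath_comp tg thK thiK mth.
- move=> s t st; exists t; split; first by rewrite (ltW st) lexx.
  by move=> /(Nset_inj n0 Ng) /(can_inj thK) ets; rewrite ets ltxx in st.
- exists (toI1 0), (toI1 1) => /=.
  rewrite g0; last by apply: (nondecr_bij0 thiK mth); rewrite toI1E // lexx ler01.
  rewrite g1; last by apply: (nondecr_bijL thiK mth); rewrite toI1E // lexx ler01.
  exact: zero_n_neq_one_n.
- by split => s hs /=; [apply: g0; apply: (nondecr_bij0 thiK mth) | apply: g1; apply: (nondecr_bijL thiK mth)].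
Qed.

End Rescaling.

Definition csum {R : realType} {n : nat} (x : 'rV[R]_n) : R := \sum_j x ord0 j.

(* For [d] in [Plset l F], [arclen d t] is the L1 arc length of [d] on [[0,t]]; it
   is a nondecreasing homeomorphism [[0,l] -> [0,n]] (the clamp is never active),
   and [naturalize hl d] is [d] reparametrized by arc length. *)
Definition arclen {R : realType} {n : nat} {l : R} (d : Ival l -> 'rV[R]_n)
  (t : Ival l) : Ival (n%:R : R) := clampI (ler0n R n) (csum (d t)).

Definition arclen_inv {R : realType} {n : nat} {l : R} (hl : 0 <= l)
  (d : Ival l -> 'rV[R]_n) (y : Ival (n%:R : R)) : Ival l :=
  match pselect (exists t, sval (arclen d t) = sval y) with
  | left e => proj1_sig (cid e)
  | right _ => clampI hl 0
  end.

Definition naturalize {R : realType} {n : nat} {l : R} (hl : 0 <= l)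
  (d : Ival l -> 'rV[R]_n) := d \o arclen_inv hl d.

Section ArcLength.
Variables (R : realType) (n : nat).

Lemma csum_lip (x y : 'rV[R]_n) : `|csum x - csum y| <= n%:R * `|x - y|.
Proof.
rewrite -sumrB (le_trans (ler_norm_sum _ _ _)) //.
rewrite -[n in n%:R]card_ord -sumr_const mulr_suml; apply: ler_sum => j _.
by rewrite mul1r; have := rV_norm_coord_le (x - y) j; rewrite !mxE.
Qed.

Lemma csum_Icontinuous (L : R) (d : Ival L -> 'rV[R]_n) :
  Icontinuous d -> Icontinuous (fun t => csum (d t) : R^o).
Proof.
move=> cd a e e0.
have n10 : 0 < (n.+1%:R : R) by rewrite ltr0n.
have [dl dl0 Hd] := cd a (e / n.+1%:R) (divr_gt0 e0 n10).
exists dl => // t /Hd h; apply: le_lt_trans (csum_lip _ _) _.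
apply: (@le_lt_trans _ _ (n%:R * (e / n.+1%:R))); first by rewrite ler_wpM2l // ltW.
by rewrite mulrA ltr_pdivrMr // mulrC ltr_pM2l // ltr_nat.
Qed.

Variables (F : set (face n)) (l : R).
Hypothesis l_gt0 : 0 < l.
Let hl : 0 <= l := ltW l_gt0.
Variable d : Ival l -> 'rV[R]_n.
Hypothesis Pd : Plset l F d.

Lemma Plset_csum_range t : 0 <= csum (d t) <= n%:R.
Proof.
apply/andP; split; first by apply: sumr_ge0 => j _; case/andP: (Plset_01 l_gt0 Pd t j).
rewrite -[n in n%:R]card_ord -sumr_const.
by apply: ler_sum => j _; case/andP: (Plset_01 l_gt0 Pd t j).
Qed.

Lemma Plset_csum_lt s t : sval s < sval t -> csum (d s) < csum (d t).
Proof.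
move=> st; have [td rd _] := Plset_path l_gt0 Pd.
have [u [/andP[su ut] hne]] := rd s t st.
have [j hj] : exists j, d u ord0 j != d s ord0 j.
  case: (pselect (exists j, d u ord0 j != d s ord0 j)) => // hne'; exfalso.
  apply: hne; apply/rowP => j; apply/eqP/negPn/negP => hj.
  by apply: hne'; exists j.
rewrite -subr_gt0 -sumrB (bigD1 j) //= ltr_pwDl //.
  rewrite subr_gt0 (lt_le_trans _ (tame_dpath_mono td ut j)) //.
  by rewrite lt_neqAle eq_sym hj (tame_dpath_mono td su j).
by apply: sumr_ge0 => i _; rewrite subr_ge0 (tame_dpath_mono td (ltW st)).
Qed.

Lemma Plset_csum_surj y : 0 <= y <= n%:R -> exists t, csum (d t) = y.
Proof.
move=> hy; have [[cd _] _ [d0 d1]] := Plset_path l_gt0 Pd.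
have sc := csum_Icontinuous ((IcontinuousP _).1 cd).
pose f r := csum (d (clampI hl r)).
have cf : continuous f.
  move=> x; apply/cvgrPdist_lt => e e0.
  have [dl dl0 Hd] := sc (clampI hl x) e e0.
  apply/nbhs_ballP; exists dl => //= r hr.
  by rewrite distrC; apply: Hd; apply: le_lt_trans (clampI_lip _ _ _) _; rewrite distrC.
have f0 : f 0 = 0.
  rewrite /f d0 ?clampIE ?lexx ?hl //.
  by rewrite /csum big1 // => j _; rewrite zero_nE.
have fl : f l = n%:R.
  rewrite /f d1 ?clampIE ?lexx ?hl //.
  by rewrite /csum -[n in n%:R]card_ord -sumr_const; apply: eq_bigr => j _; rewrite one_nE.
have hv : Num.min (f 0) (f l) <= y <= Num.max (f 0) (f l).
  by rewrite f0 fl (min_l (ler0n _ _)) (max_r (ler0n _ _)).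
have [c _ fc] := IVT hl (continuous_subspaceT cf) hv.
by exists (clampI hl c).
Qed.

Lemma arclenE t : sval (arclen d t) = csum (d t).
Proof. by rewrite clampIE // Plset_csum_range. Qed.

Lemma arclen_invK : cancel (arclen_inv hl d) (arclen d).
Proof.
move=> y; rewrite /arclen_inv; case: pselect => [e|ne]; first by apply: Ival_inj; case: (cid e).
exfalso; apply: ne.
have [t ht] := Plset_csum_surj (y := sval y) (ltac:(by rewrite Ival_ge0 Ival_leL)).
by exists t; rewrite arclenE ht.
Qed.

Lemma arclen_nondecr : nondecr (arclen d).
Proof.
move=> s t; rewrite !arclenE le_eqVlt => /orP[/eqP/Ival_inj -> //|st].
exact/ltW/Plset_csum_lt.
Qed.

Lemma arclenK : cancel (arclen d) (arclen_inv hl d).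
Proof.
move=> t; have e := arclen_invK (arclen d t).
set u := arclen_inv hl d (arclen d t) in e *.
apply: Ival_inj; apply/eqP; rewrite eq_le !leNgt.
by apply/andP; split; apply/negP => /Plset_csum_lt; rewrite -!arclenE e ltxx.
Qed.

Lemma arclen_Gset : Gset l n (arclen d).
Proof.
have m := nondecr_inv arclen_invK arclen_nondecr.
split; first exact: arclen_nondecr.
exists (arclen_inv hl d); split => //.
  exact: arclenK.
  exact: arclen_invK.
  exact: nondecr_bij_cont arclen_invK arclen_nondecr.
exact: nondecr_bij_cont arclenK m.
Qed.

Lemma naturalize_Nset : Nset R F (naturalize hl d).
Proof.
have m := nondecr_inv arclen_invK arclen_nondecr.
have [td _ [d0 d1]] := Plset_path l_gt0 Pd.
split.
- exact: tame_dpath_comp td arclen_invK arclenK m.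
- move=> s t s0; rewrite /naturalize /= (d0 _ (nondecr_bij0 arclenK m s0)).
  have -> : sval t = csum (d (arclen_inv hl d t)) by rewrite -arclenE arclen_invK.
  apply: eq_bigr => j _; rewrite zero_nE subr0 ger0_norm //.
  by case/andP: (Plset_01 l_gt0 Pd (arclen_inv hl d t) j).
- by split => s hs /=; [apply: d0; apply: (nondecr_bij0 arclenK m) | apply: d1; apply: (nondecr_bijL arclenK m)].
Qed.

Lemma naturalize_arclen : naturalize hl d \o arclen d = d.
Proof. by apply: funext => t; rewrite /naturalize /= arclenK. Qed.

End ArcLength.

Lemma sup_cont_scale (R : realType) (V : normedModType R) (Y : Type) (pi : Y -> V)
  (L : R) (k : nat) (D : set 'rV[R]_k) (h : 'rV[R]_k -> Ival L -> Y) (c : R) :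
  0 < c -> sup_cont D pi h -> forall x0, D x0 -> forall e, 0 < e -> exists2 d : R, 0 < d &
    forall x, D x -> `|x - x0| < d -> forall t, c * `|pi (h x t) - pi (h x0 t)| < e.
Proof.
move=> c0 uc x0 Dx0 e e0; have [d d0 Hd] := uc x0 Dx0 _ (divr_gt0 e0 c0).
by exists d => // x Dx xd t; rewrite mulrC -ltr_pdivlMr //; exact: Hd.
Qed.

Section UniformDependence.
Variables (R : realType) (n : nat) (F : set (face n)) (l : R).
Hypotheses (n_gt0 : (0 < n)%N) (l_gt0 : 0 < l).
Let hl : 0 <= l := ltW l_gt0.

Lemma Gset_Icontinuous (phi : Ival l -> Ival (n%:R : R)) :
  Gset l n phi -> Icontinuous (fun t => sval (phi t) : R^o).
Proof. by move=> [_ [psi [_ _ cphi _]]]; apply/IcontinuousP/cont_ItopE. Qed.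

Lemma comp_Icontinuous (phi : Ival l -> Ival (n%:R : R)) (g : Ival (n%:R : R) -> 'rV[R]_n) :
  Gset l n phi -> Nset R F g -> Icontinuous (g \o phi).
Proof.
move=> Gp Ng a e e0; have [d d0 Hd] := Gset_Icontinuous Gp a e0.
by exists d => // t /Hd h; exact: le_lt_trans (Nset_lip n_gt0 Ng _ _) h.
Qed.

Variables (k : nat) (D : set 'rV[R]_k).

(* Uniformly in [t], [g' (phi' t)] is close to [g (phi' t)], which is close to
   [g (phi t)] because natural paths are 1-Lipschitz. *)
Lemma sup_cont_comp (s1 : 'rV[R]_k -> Ival l -> Ival (n%:R : R))
  (s2 : 'rV[R]_k -> Ival (n%:R : R) -> 'rV[R]_n) :
  (forall x, D x -> Nset R F (s2 x)) ->
  sup_cont D (fun t => sval t : R^o) s1 -> sup_cont D id s2 ->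
  sup_cont D id (fun x => s2 x \o s1 x).
Proof.
move=> N2 u1 u2 x0 Dx0 e e0.
have e20 : 0 < e / 2 by rewrite divr_gt0.
have [d1 d10 H1] := u1 x0 Dx0 _ e20.
have [d2 d20 H2] := u2 x0 Dx0 _ e20.
exists (Num.min d1 d2); first by rewrite lt_min d10 d20.
move=> x Dx; rewrite lt_min => /andP[h1 h2] t /=.
have a1 := H2 x Dx h2 (s1 x t).
have a2 := le_lt_trans (Nset_lip n_gt0 (N2 x0 Dx0) (s1 x t) (s1 x0 t)) (H1 x Dx h1 t).
rewrite -(subrKA (s2 x0 (s1 x t))) (le_lt_trans (ler_normD _ _)) //.
by rewrite (splitr e) ltrD.
Qed.

Variable s : 'rV[R]_k -> Ival l -> 'rV[R]_n.
Hypothesis sP : forall x, D x -> Plset l F (s x).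

Lemma sup_cont_arclen : sup_cont D id s ->
  sup_cont D (fun t => sval t : R^o) (fun x => arclen (s x)).
Proof.
move=> us x0 Dx0 e e0.
have [d d0 Hd] := sup_cont_scale (ltr0n R n.+1) us Dx0 e0.
exists d => // x Dx xd t.
rewrite (arclenE l_gt0 (sP Dx)) (arclenE l_gt0 (sP Dx0)); apply: le_lt_trans (csum_lip _ _) _.
by apply: le_lt_trans (Hd x Dx xd t); rewrite ler_wpM2r // ler_nat.
Qed.

(* At the parameter [t] where [s x] has arc length [y], [s x0] has arc length
   within [n |s x t - s x0 t|] of [y]; [naturalize (s x0)] is 1-Lipschitz. *)
Lemma sup_cont_naturalize : sup_cont D id s ->
  sup_cont D id (fun x => naturalize hl (s x)).
Proof.
move=> us x0 Dx0 e e0.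
have [d d0 Hd] := sup_cont_scale (ltr0n R n.+1) us Dx0 e0.
exists d => // x Dx xd y.
have Px := sP Dx; have Px0 := sP Dx0.
set tx := arclen_inv hl (s x) y.
have E1 : naturalize hl (s x) y = s x tx by [].
have E2 : s x0 tx = naturalize hl (s x0) (arclen (s x0) tx).
  by rewrite -[in LHS](naturalize_arclen l_gt0 Px0).
have E3 : sval y = csum (s x tx) by rewrite -(arclenE l_gt0 Px) (arclen_invK l_gt0 Px).
have b1 := Nset_lip n_gt0 (naturalize_Nset l_gt0 Px0) (arclen (s x0) tx) y.
rewrite (arclenE l_gt0 Px0) E3 in b1.
have b3 : `|s x0 tx - naturalize hl (s x0) y| <= n%:R * `|s x tx - s x0 tx|.
  by rewrite [X in `|X - _|]E2 (le_trans b1) // distrC csum_lip.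
rewrite E1 -(subrKA (s x0 tx)) (le_lt_trans (ler_normD _ _)) //.
apply: le_lt_trans (Hd x Dx xd tx).
by rewrite mulrSr mulrDl mul1r addrC lerD.
Qed.

End UniformDependence.

Section Homeomorphism.
Variables (R : realType) (n : nat) (F : set (face n)) (l : R).
Hypotheses (n_gt0 : (0 < n)%N) (l_gt0 : 0 < l).
Let hl : 0 <= l := ltW l_gt0.

Lemma Plset_Cmap : Plset l F `<=` Cmap l open (realiz R F).
Proof.
move=> d Pd; have [td _ _] := Plset_path l_gt0 Pd; split; last by case: td.
by move=> t; have [c Fc Hc] := tame_dpath_face td l_gt0 t; exists c.
Qed.

Lemma Nset_Cmap : Nset R F `<=` Cmap (n%:R : R) open (realiz R F).
Proof.
move=> g [tg _ _]; split; last by case: tg.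
have n0 : 0 < (n%:R : R) by rewrite ltr0n.
by move=> t; have [c Fc Hc] := tame_dpath_face tg n0 t; exists c.
Qed.

Lemma Gset_Cmap : Gset l n `<=` Cmap l (@Itop R n%:R) setT.
Proof. by move=> phi [_ [psi [_ _ c _]]]; split. Qed.

(* [phi] is read off [g \o phi] as its arc length; then [g] on [phi]'s range. *)
Lemma compose_map_inj (p q : (Ival l -> Ival (n%:R : R)) * (Ival (n%:R : R) -> 'rV[R]_n)) :
  Gset l n p.1 -> Nset R F p.2 -> Nset R F q.2 -> compose_map p = compose_map q -> p = q.
Proof.
case: p q => [phi g] [phi' g'] /= Gp Ng Nq E.
have e : phi = phi'.
  apply: funext => t; apply: Ival_inj.
  rewrite -(Nset_sum n_gt0 Ng) -(Nset_sum n_gt0 Nq).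
  by have /= -> := congr1 (fun f => f t) E.
subst phi'.
have [_ [psi [_ psiK _ _]]] := Gp.
suff -> : g = g' by [].
by apply: funext => u; rewrite -(psiK u); have /= -> := congr1 (fun f => f (psi u)) E.
Qed.

Lemma cont_on_decompose (m : nat) (s : 'rV[R]_m.+1 -> Ival l -> 'rV[R]_n) :
  (forall x, simplex R m x -> Plset l F (s x)) ->
  cont_on (simplex R m) s (Defs.subspace (Plset l F) (TOPsp l open (realiz R F)).2) ->
  cont_on (simplex R m) (fun x => (arclen (s x), naturalize hl (s x)))
    (prod_top (Gsp l n) (Nsp R F)).
Proof.
move=> sP /(cont_on_subspace_kelley _ Plset_Cmap sP) cs.
have us : sup_cont (simplex R m) id s.
  apply: compact_open_sup_cont cs => // x /sP Pd.
  by have [[cd _] _ _] := Plset_path l_gt0 Pd; apply/IcontinuousP.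
apply: cont_on_pair.
- apply/(cont_on_subsp _ Gset_Cmap (fun x Dx => arclen_Gset l_gt0 (sP x Dx))).
  apply: sup_cont_compact_open (@Itop_preimageP R _) (sup_cont_arclen l_gt0 sP us).
  by move=> x /sP Pd; exact: Gset_Icontinuous (arclen_Gset l_gt0 Pd).
- apply/(cont_on_subsp _ Nset_Cmap (fun x Dx => naturalize_Nset l_gt0 (sP x Dx))).
  apply: sup_cont_compact_open (sup_cont_naturalize n_gt0 l_gt0 sP us) => [x /sP Pd|V oV].
    exact: (Nset_Icontinuous n_gt0 (naturalize_Nset l_gt0 Pd)).
  by exists V.
Qed.

Lemma cont_on_compose (m : nat)
  (s : 'rV[R]_m.+1 -> (Ival l -> Ival (n%:R : R)) * (Ival (n%:R : R) -> 'rV[R]_n)) :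
  (forall x, simplex R m x -> (Gset l n `*` Nset R F) (s x)) ->
  cont_on (simplex R m) s (prod_top (Gsp l n) (Nsp R F)) ->
  cont_on (simplex R m) (fun x => compose_map (s x))
    (Defs.subspace (Plset l F) (TOPsp l open (realiz R F)).2).
Proof.
move=> sS cs.
have sG x : simplex R m x -> Gset l n (s x).1 by case/sS.
have sN x : simplex R m x -> Nset R F (s x).2 by case/sS.
have c1 := @cont_on_fst R _ _ _ _ (Gsp l n) (Nsp R F) s
  (fun V => @kelley_sub R _ _ _ V) (kelley_setT _ _ _) sN cs.
have c2 := @cont_on_snd R _ _ _ _ (Gsp l n) (Nsp R F) s
  (fun V => @kelley_sub R _ _ _ V) (kelley_setT _ _ _) sG cs.
have u1 : sup_cont (simplex R m) (fun t => sval t : R^o) (fun x => (s x).1).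
  apply: compact_open_sup_cont ((cont_on_subsp _ Gset_Cmap sG).1 c1).
    by move=> x /sG; exact: Gset_Icontinuous.
  exact: Itop_preimage.
have u2 : sup_cont (simplex R m) id (fun x => (s x).2).
  apply: compact_open_sup_cont ((cont_on_subsp _ Nset_Cmap sN).1 c2) => //.
  by move=> x /sN; exact: Nset_Icontinuous.
apply/(cont_on_subspace_kelley _ Plset_Cmap).
  by move=> x Dx; case: (sS x Dx) => ? ?; exact: comp_Plset.
apply: sup_cont_compact_open (sup_cont_comp n_gt0 sN u1 u2).
  by move=> x Dx; exact: (comp_Icontinuous n_gt0 (sG x Dx) (sN x Dx)).
by move=> V oV; exists V.
Qed.

Lemma compose_map_homeo :
  homeo (prodsp R (Gsp l n) (Nsp R F)) (Plsp l F) (@compose_map _ _ _).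
Proof.
pose split_path (d : Ival l -> 'rV[R]_n) := (arclen d, naturalize hl d).
have GN_Pl p : (Gset l n `*` Nset R F) p -> Plset l F (compose_map p).
  by case: p => phi g [/= Gp Ng]; exact: comp_Plset.
have Pl_GN d : Plset l F d -> (Gset l n `*` Nset R F) (split_path d).
  by move=> Pd; split; [exact: (arclen_Gset l_gt0 Pd) | exact: (naturalize_Nset l_gt0 Pd)].
have split_pathK d : Plset l F d -> compose_map (split_path d) = d.
  exact: naturalize_arclen.
have inj p q : (Gset l n `*` Nset R F) p -> (Gset l n `*` Nset R F) q ->
    compose_map p = compose_map q -> p = q.
  by move=> [Gp Np] [_ Nq]; exact: compose_map_inj.
split => //; first by move=> d Pd; exists (split_path d); [exact: Pl_GN | exact: split_pathK].
move=> U Usub; split.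
- move=> [_ HU]; split; first by move=> _ [p Up <-]; apply/GN_Pl/Usub.
  move=> m s sP cs.
  have sGN x : simplex R m x -> (Gset l n `*` Nset R F) (split_path (s x)).
    by move/sP; exact: Pl_GN.
  apply: open_in_ext (HU m _ sGN (cont_on_decompose sP cs)) => x Dx.
  split => [Ux|[p Up E]]; first by exists (split_path (s x)) => //; exact: split_pathK (sP x Dx).
  rewrite /preimage /= (inj _ _ (sGN x Dx) (Usub _ Up)) //.
  by rewrite split_pathK ?E //; exact: sP.
- move=> [_ HfU]; split => // m s sS cs.
  have sP x : simplex R m x -> Plset l F (compose_map (s x)) by move/sS; exact: GN_Pl.
  apply: open_in_ext (HfU m _ sP (cont_on_compose sS cs)) => x Dx.
  split => [[p Up E]|Usx]; last by exists (s x).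
  by rewrite /preimage /= -(inj _ _ (Usub _ Up) (sS x Dx) E).
Qed.

End Homeomorphism.

Lemma Plsp1 (R : realType) (n : nat) (F : set (face n)) : Plsp (1 : R) F = Ptopsp R F.
Proof.
have toI1_id (t : Ival (1 : R)) : toI1 (sval t / 1) = t.
  by apply: Ival_inj; rewrite divr1 toI1E // Ival_ge0 Ival_leL.
rewrite /Plsp /Ptopsp; congr subsp; apply/seteqP; split => d.
  by move=> [g Pg dE]; have -> : d = g by apply: funext => t; rewrite dE toI1_id.
by move=> Pd; exists d => // t; rewrite toI1_id.
Qed.

Theorem proposition5p5 (R : realType) (n : nat) (l : R) :
  (1 <= n)%N -> 0 < l ->
  [/\ homeo (prodsp R (Gsp l n) (Nsp R (cubeF n))) (Plsp l (cubeF n))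
        (@compose_map _ _ _),
      homeo (prodsp R (Gsp l n) (Nsp R (bdryF n))) (Plsp l (bdryF n))
        (@compose_map _ _ _),
      homeo (prodsp R (Gsp (1 : R) n) (Nsp R (cubeF n))) (Ptopsp R (cubeF n))
        (@compose_map _ _ _) &
      homeo (prodsp R (Gsp (1 : R) n) (Nsp R (bdryF n))) (Ptopsp R (bdryF n))
        (@compose_map _ _ _)].
Proof.
move=> n_gt0 l_gt0.
by split; rewrite -?Plsp1; apply: compose_map_homeo.
Qed.
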